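(* Let $S=(0,1)$. Let $\{\lambda_n\}_{n\geq 1}$ be i.i.d. random variables, each uniformly distributed on $(3.87,4)$, and let $X_0$ be an $S$-valued random variable independent of the $\lambda_n$'s. Define the Markov process $X_{n+1}=\lambda_{n+1}X_n(1-X_n)$ for $n\geq 0$. Let $A_0=\left(1-\frac{1}{3.87},\,\frac34\right)$ and let $\phi$ be normalized Lebesgue measure on $A_0$, i.e. $\phi(B)=\mathrm{Leb}(B\cap A_0)/\mathrm{Leb}(A_0)$. Then $\{X_n\}_{n\geq 0}$ is $\phi$-irreducible: for every $x\in S$ and every Borel set $B\subset S$ with $\phi(B)>0$, there is $n\geq 1$ such that $p^n(x,B)=\mathrm{Prob}(X_n\in B\mid X_0=x)>0$.
   Context: $p^n(x,B)$ denotes the $n$-step transition probability $\mathrm{Prob}(X_n\in B\mid X_0=x)$ of the Markov chain. *)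

From HB Require Import structures.
From mathcomp Require Import all_boot all_order all_algebra.
From mathcomp Require Import all_classical all_reals all_analysis.
Set Implicit Arguments. Unset Strict Implicit. Unset Printing Implicit Defensive.
Import Order.TTheory GRing.Theory Num.Theory.
Local Open Scope classical_set_scope.
Local Open Scope ring_scope.

Definition lam_lo {R : realType} : R := 387%:R / 100%:R.
Definition S_space {R : realType} : set R := `]0, 1[%classic.
Definition lam_int {R : realType} : set R := `]lam_lo, 4%:R[%classic.
Definition logistic {R : realType} (l x : R) : R := l * x * (1 - x).

(* n-step transition probability p^n(x,B) of the chain X_{n+1} = l_{n+1} X_n (1 - X_n),
   l_n iid uniform on (3.87,4):
   p^0(x,B) = 1_B(x),
   p^{n+1}(x,B) = (1/0.13) * int_{(3.87,4)} p^n(l x (1-x), B) dl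
   (first-step / Chapman-Kolmogorov decomposition with the one-step kernel
    p(x,B) = Leb{l in (3.87,4) : l x (1-x) in B} / Leb((3.87,4))). *)
Fixpoint ptrans {R : realType} (n : nat) (x : R) (B : set R) : \bar R :=
  match n with
  | 0 => ((\1_B x : R))%:E
  | k.+1 => ((4%:R - lam_lo)^-1)%:E *
            (\int[@lebesgue_measure R]_(l in lam_int) ptrans k (logistic l x) B)%E
  end.

Definition A0 {R : realType} : set R := `]1 - lam_lo^-1, 3%:R / 4%:R[%classic.
Definition phi {R : realType} (B : set R) : \bar R :=
  (@lebesgue_measure R (B `&` A0) * ((fine (@lebesgue_measure R A0))^-1)%:E)%E.

(* Call x good ([reachA0 x]) when some admissible orbit x, f_{l_1} x, f_{l_2} (f_{l_1} x), ...
   (with f_l x = l x (1 - x) and every l_i in (3.87, 4)) enters A_0.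
   Good points carry a positive lower bound for p^n(., B) on a neighbourhood:
   A_0 is the set of fixed points 1 - 1/l, so from any point of A_0 the law of
   one step dominates a multiple of Lebesgue measure on all of A_0, and each
   earlier step of an admissible orbit is an open condition in the point and the
   parameter.  It remains to see that every x in (0, 1) is good.  The good set is
   open, hence stable under preimages by f_4 (use l slightly below 4); since
   f_4 (sin^2 t) = sin^2 (2 t), it contains the dense set of points
   sin^2 ((a + k pi) / 2^n) with sin^2 a in A_0.  Finally x is good as soon as its
   one-step range (3.87 x (1 - x), 4 x (1 - x)) meets the good set. *)

From HB Require Import structures.
From mathcomp Require Import all_boot all_order all_algebra.
From mathcomp Require Import all_classical all_reals all_analysis.
From mathcomp Require Import ring lra.
Set Implicit Arguments. Unset Strict Implicit. Unset Printing Implicit Defensive.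
Import Order.TTheory GRing.Theory Num.Theory.
Local Open Scope classical_set_scope.
Local Open Scope ring_scope.
Import HBNNSimple.

Lemma mul_measure_le_integral d (T : measurableType d) (R : realType)
    (mu : {measure set T -> \bar R}) (D A : set T) (f : T -> \bar R) (c : R) :
  measurable A -> A `<=` D -> 0 <= c -> (forall x, D x -> (0 <= f x)%E) ->
  (forall x, A x -> (c%:E <= f x)%E) ->
  (c%:E * mu A <= \int[mu]_(x in D) f x)%E.
Proof.
(* No measurability of f is needed: the integral of a nonnegative function is
   the supremum of the integrals of the simple functions below it. *)
move=> mA AD c0 f0 fA; rewrite ge0_integralE //.
pose h := scale_nnsfun (indic_nnsfun R mA) c0.
have -> : (c%:E * mu A)%E = sintegral mu h.
  by rewrite sintegralrM /measurable_realfun.mindic sintegral_indic.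
apply: ereal_sup_ubound => /=; exists h => // x.
rewrite /= /measurable_realfun.mindic /patch indicE.
case: (boolP (x \in A)) => xA.
  by rewrite mulr1 mem_set; [apply: fA; apply/set_mem | apply: AD; apply/set_mem].
by rewrite mulr0; case: ifP => // /set_mem /f0.
Qed.

Lemma lebesgue_measure_mulr_preimage (R : realType) (y : R) (E : set R) :
  0 < y -> measurable E ->
  lebesgue_measure E = (y%:E * lebesgue_measure ((fun l : R => (l * y)%R) @^-1` E))%E.
Proof.
move=> y0 mE; pose yn := NngNum (ltW y0).
have mm : measurable_fun [set: measurableTypeR R]
    (fun l : measurableTypeR R => (l * y)%R : measurableTypeR R).
  exact: measurable_realfun.mulrr_measurable.
have := @lebesgue_measure_unique R (mscale yn (pushforward lebesgue_measure
  (fun l : measurableTypeR R => (l * y)%R : measurableTypeR R))).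
move=> /(_ mm _ E mE) -> //.
move=> _ [[a b]] _ <-.
change (lebesgue_measure `]a, b]%classic =
  (y%:E * lebesgue_measure ((fun l => (l * y)%R) @^-1` `]a, b]%classic))%E).
have -> : (fun l => l * y) @^-1` `]a, b]%classic = `](a / y), (b / y)]%classic.
  by apply/seteqP; split => l /=; rewrite !in_itv /= ler_pdivlMr ?ltr_pdivrMr.
rewrite !lebesgue_measure_itv /= !lte_fin ltr_pM2r ?invr_gt0 //.
case: ifP => _; last by rewrite mule0.
by rewrite -EFinD -EFinM; congr (_%:E); field; exact: lt0r_neq0.
Qed.

Lemma phi_gt0_measure (R : realType) (B : set R) : measurable B -> (0 < phi B)%E ->
  exists2 mu : R, 0 < mu & lebesgue_measure (B `&` A0) = mu%:E.
Proof.
move=> mB phiB; have mA0 : measurable (A0 : set R) by exact: measurable_itv.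
have A0_fin : (lebesgue_measure (A0 : set R) < +oo)%E.
  by rewrite lebesgue_measure_itv; case: ifP => _; rewrite ltry.
have BA0_ge0 : (0 <= lebesgue_measure (B `&` A0))%E by exact: measure_ge0.
have BA0_fin : lebesgue_measure (B `&` A0) \is a fin_num.
  rewrite ge0_fin_numE //; apply: le_lt_trans A0_fin.
  exact: measureIr.
have BA0_neq0 : lebesgue_measure (B `&` A0) != 0%E.
  by apply/eqP => BA0_0; move: phiB; rewrite /phi BA0_0 mul0e ltxx.
exists (fine (lebesgue_measure (B `&` A0))); last by rewrite fineK.
by apply: fine_gt0; rewrite lt_neqAle eq_sym BA0_neq0 BA0_ge0 -ge0_fin_numE.
Qed.

Section Reachability.
Variable R : realType.
Implicit Types a b x y w l t : R.

Lemma lam_intE l : lam_int l <-> 387 / 100 < l < 4.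
Proof. by []. Qed.

Lemma A0E x : A0 x <-> 287 / 387 < x < 3 / 4.
Proof.
rewrite /A0 /= in_itv /=.
by have -> : 1 - (lam_lo : R)^-1 = 287 / 387 by rewrite /lam_lo; field.
Qed.

Inductive reachA0 : R -> Prop :=
| reachA0_in x : A0 x -> reachA0 x
| reachA0_step x l : lam_int l -> reachA0 (logistic l x) -> reachA0 x.

Lemma reachA0_01 x : reachA0 x -> 0 < x < 1.
Proof.
elim=> {x} [x /A0E/andP[x1 x2] | x l /lam_intE/andP[l1 l2] _ /andP[f0 _]].
  by apply/andP; split; lra.
have g0 : 0 < x * (1 - x) by move: f0; rewrite /logistic; nra.
by apply/andP; split; nra.
Qed.

Lemma logistic_dist l l' w x : `|w - x| <= 1 -> 0 < x < 1 -> 0 <= l' <= 4 ->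
  `|logistic l w - logistic l' x| <= 2 * `|l - l'| + 8 * `|w - x|.
Proof.
move=> wx /andP[x0 x1] /andP[l0 l4].
have -> : logistic l w - logistic l' x = (l - l') * (w * (1 - w)) + l' * (w - x) * (1 - w - x).
  by rewrite /logistic; ring.
move: wx; rewrite ler_norml => /andP[wx1 wx2].
apply: (le_trans (ler_normD _ _)); apply: lerD.
  by rewrite normrM mulrC ler_wpM2r // ler_norml; apply/andP; split; nra.
have h : `|1 - w - x| <= 2 by rewrite ler_norml; apply/andP; split; lra.
have h' : l' * `|1 - w - x| <= 8 by have := normr_ge0 (1 - w - x); nra.
by rewrite !normrM (ger0_norm l0) mulrAC ler_wpM2r.
Qed.

Lemma reachA0_open x : reachA0 x -> exists2 r, 0 < r & forall w, `|w - x| < r -> reachA0 w.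
Proof.
elim=> {x} [x /A0E/andP[x1 x2] | x l hl hfx [r r0 hr]].
  exists (Num.min (x - 287 / 387) (3 / 4 - x)); first by rewrite lt_min; apply/andP; split; lra.
  move=> w; rewrite lt_min !ltr_distl => /andP[/andP[w1 _] /andP[_ w2]].
  by apply/reachA0_in/A0E/andP; split; lra.
have x01 := reachA0_01 (reachA0_step hl hfx).
move: hl => /lam_intE/andP[l1 l2].
exists (Num.min 1 (r / 16)); first by rewrite lt_min; apply/andP; split; lra.
move=> w; rewrite lt_min => /andP[w1 w2].
apply: (reachA0_step (l := l)); first by apply/lam_intE/andP; split.
apply: hr; apply: (le_lt_trans (logistic_dist l (l' := l) _ x01 _)).
- exact: ltW.
- by apply/andP; split; lra.
- by rewrite subrr normr0; lra.
Qed.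

Lemma reachA0_logistic4 y : reachA0 (logistic 4 y) -> reachA0 y.
Proof.
move=> hy; have /andP[f0 _] := reachA0_01 hy.
have [r r0 hr] := reachA0_open hy.
have g0 : 0 < y * (1 - y) by move: f0; rewrite /logistic; nra.
have g4 : y * (1 - y) <= 1 / 4 by have := sqr_ge0 (y - 1 / 2); nra.
pose e := Num.min (13 / 200) (r / 2).
have e0 : 0 < e by rewrite /e lt_min; apply/andP; split; lra.
have e1 : e <= 13 / 200 by rewrite /e ge_min lexx.
have e2 : e <= r / 2 by rewrite /e ge_min lexx orbT.
apply: (reachA0_step (l := 4 - e)); first by apply/lam_intE/andP; split; lra.
apply: hr; have -> : logistic (4 - e) y - logistic 4 y = - (e * (y * (1 - y))).
  by rewrite /logistic; ring.
by rewrite normrN ger0_norm; nra.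
Qed.

Lemma logistic4_sin2 t : logistic 4 (sin t ^+ 2) = sin (t *+ 2) ^+ 2.
Proof. by rewrite sin_mulr2n /logistic -cos2sin2; ring. Qed.

Lemma reachA0_sin2_mul_pow2 n t : reachA0 (sin (t * 2 ^+ n) ^+ 2) -> reachA0 (sin t ^+ 2).
Proof.
elim: n t => [|n IH] t; first by rewrite expr0 mulr1.
rewrite [2 ^+ n.+1]exprS mulrA mulr_natr => /IH.
by rewrite -logistic4_sin2; exact: reachA0_logistic4.
Qed.

Lemma sin2Dpi k t : sin (t + pi *+ k) ^+ 2 = sin t ^+ 2 :> R.
Proof. by rewrite (alternatingn (@sinDpi R)) exprMn sqrr_sign mul1r. Qed.

Lemma ler_sin2 a b : 0 <= a -> a <= b -> b <= pi / 2 -> sin a ^+ 2 <= sin b ^+ 2 :> R.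
Proof.
move=> a0 ab bpi; have pi0 : 0 < pi :> R by exact: pi_gt0.
have Ia : a \in `[- (pi / 2), pi / 2] by rewrite in_itv /=; apply/andP; split; lra.
have Ib : b \in `[- (pi / 2), pi / 2] by rewrite in_itv /=; apply/andP; split; lra.
have sa0 : 0 <= sin a by apply: sin_ge0_pi; apply/andP; split; lra.
have sb0 : 0 <= sin b by apply: sin_ge0_pi; apply/andP; split; lra.
by rewrite ler_sqr ?nnegrE // leNgt (ltr_sin Ib Ia) -leNgt.
Qed.

Lemma sin2_onto y : 0 <= y <= 1 -> exists2 t, 0 <= t <= pi / 2 & sin t ^+ 2 = y.
Proof.
move=> /andP[y0 y1]; have pi0 : 0 < pi :> R by exact: pi_gt0.
have s01 : -1 <= Num.sqrt y <= 1.
  apply/andP; split; last by rewrite -sqrtr1 ler_sqrt.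
  by apply: le_trans (sqrtr_ge0 y); lra.
have sK : sin (asin (Num.sqrt y)) = Num.sqrt y by rewrite asinK // in_itv.
exists (asin (Num.sqrt y)); last by rewrite sK sqr_sqrtr.
rewrite asin_lepi2 // andbT leNgt -ltr_sin ?sin0 ?sK -?leNgt ?sqrtr_ge0 //.
  by rewrite in_itv /= asin_geNpi2 // asin_lepi2.
by rewrite in_itv /=; apply/andP; split; lra.
Qed.

Lemma dyadic_shift_itv (T psi a b : R) : 0 < T -> 0 <= psi <= T -> 0 <= a < b ->
  exists n k, a < (psi + T *+ k) / 2 ^+ n < b.
Proof.
move=> T0 /andP[psi0 psiT] /andP[a0 ab].
pose n := Num.bound (T / (b - a)).
have N0 : 0 < 2 ^+ n :> R by apply: exprn_gt0.
have hN : T < (b - a) * 2 ^+ n.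
  by rewrite -ltr_pdivrMl ?subr_gt0 // mulrC; exact: upper_nthrootP.
pose u := a * 2 ^+ n - psi; pose s := u / T.
have uE : a * 2 ^+ n - psi = s * T by rewrite /s divfK ?gt_eqF.
have s1 : 0 <= s + 1.
  have uT : 0 <= u + T by rewrite /u; have := mulr_ge0 a0 (ltW N0); lra.
  by have := divr_ge0 uT (ltW T0); rewrite mulrDl divff ?gt_eqF.
pose k := Num.truncn (s + 1).
have /andP[k1 k2] := truncn_itv s1; rewrite -natr1 in k2.
have kT1 : s * T < k%:R * T by rewrite ltr_pM2r //; lra.
have kT2 : k%:R * T <= s * T + T by rewrite -[X in _ + X]mul1r -mulrDl ler_pM2r.
exists n, k; rewrite -[T *+ k]mulr_natr [T * _]mulrC ltr_pdivlMr // ltr_pdivrMr //.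
by rewrite mulrBl in hN; apply/andP; split; lra.
Qed.

Lemma reachA0_dense p q : 0 <= p -> p < q -> q <= 1 -> exists2 v, p < v < q & reachA0 v.
Proof.
move=> p0 pq q1; have pi0 : 0 < pi :> R by exact: pi_gt0.
have [a a_itv aE] := @sin2_onto (745 / 1000) ltac:(apply/andP; split; lra).
have [b b_itv bE] := @sin2_onto ((2 * p + q) / 3) ltac:(apply/andP; split; lra).
have [c c_itv cE] := @sin2_onto ((p + 2 * q) / 3) ltac:(apply/andP; split; lra).
move: a_itv b_itv c_itv => /andP[a0 a1] /andP[b0 b1] /andP[c0 c1].
have bc : b < c.
  rewrite ltNge; apply/negP => cb; have := ler_sin2 c0 cb b1.
  by rewrite bE cE; lra.
have [n [k /andP[bt tc]]] := @dyadic_shift_itv pi a b c pi0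
  ltac:(apply/andP; split; lra) ltac:(by apply/andP; split).
set t := _ / _ in bt tc.
exists (sin t ^+ 2).
  have := ler_sin2 b0 (ltW bt) ltac:(lra); have := ler_sin2 (a := t) ltac:(lra) (ltW tc) c1.
  by rewrite bE cE => *; apply/andP; split; lra.
apply: (@reachA0_sin2_mul_pow2 n); rewrite divfK ?expf_neq0 // sin2Dpi aE.
by apply/reachA0_in/A0E/andP; split; lra.
Qed.

Lemma reachA0_all x : 0 < x < 1 -> reachA0 x.
Proof.
move=> /andP[x0 x1]; set g := x * (1 - x).
have g0 : 0 < g by rewrite /g; nra.
have g4 : g <= 1 / 4 by have := sqr_ge0 (x - 1 / 2); rewrite /g; nra.
have [v /andP[v1 v2] hv] := @reachA0_dense (387 / 100 * g) (4 * g)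
  ltac:(nra) ltac:(nra) ltac:(nra).
apply: (reachA0_step (l := v / g)).
  by apply/lam_intE/andP; rewrite ltr_pdivlMr // ltr_pdivrMr.
by rewrite /logistic -mulrA -/g divfK ?gt_eqF.
Qed.

End Reachability.

Section TransitionLowerBounds.
Variables (R : realType) (B : set R).
Implicit Types x w l : R.

Lemma ptrans_ge0 k x : (0 <= ptrans k x B)%E.
Proof.
elim: k x => [|k IH] x /=; first by rewrite lee_fin indicE ler0n.
apply: mule_ge0; last by apply: integral_ge0 => l _; exact: IH.
by rewrite lee_fin invr_ge0 /lam_lo; lra.
Qed.

Definition ptrans_gt0_near k x := exists2 r : R, 0 < r &
  exists2 d : R, 0 < d & forall w, `|w - x| < r -> (d%:E <= ptrans k w B)%E.

Lemma ptrans_gt0_near_step k x l : 0 < x < 1 -> lam_int l ->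
  ptrans_gt0_near k (logistic l x) -> ptrans_gt0_near k.+1 x.
Proof.
move=> x01 /lam_intE/andP[l1 l2] [r r0 [d d0 hd]].
pose e := Num.min (Num.min (l - 387 / 100) (4 - l)) (r / 4).
have e0 : 0 < e by rewrite /e !lt_min; apply/andP; split; [apply/andP; split|]; lra.
have e1 : e <= l - 387 / 100 by rewrite /e !ge_min lexx.
have e2 : e <= 4 - l by rewrite /e !ge_min lexx orbT.
have e3 : e <= r / 4 by rewrite /e !ge_min lexx !orbT.
exists (Num.min 1 (r / 16)); first by rewrite lt_min; apply/andP; split; lra.
exists ((4 - lam_lo)^-1 * (d * (e *+ 2))).
  by rewrite /lam_lo; apply: mulr_gt0; [rewrite invr_gt0; lra | nra].
move=> w; rewrite lt_min => /andP[w1 w2].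
have : (d%:E * lebesgue_measure `](l - e)%R, (l + e)%R[%classic <=
    \int[lebesgue_measure]_(l' in lam_int) ptrans k (logistic l' w) B)%E.
  apply: mul_measure_le_integral => [||||l'].
  - exact: measurable_itv.
  - move=> l' /=; rewrite /lam_int /= !in_itv /= => /andP[? ?].
    by apply/andP; split; rewrite /lam_lo; lra.
  - exact: ltW.
  - by move=> l' _; exact: ptrans_ge0.
  rewrite /= in_itv /= => /andP[l'1 l'2]; apply: hd.
  apply: (le_lt_trans (logistic_dist l' _ x01 _)).
  - exact: ltW.
  - by apply/andP; split; lra.
  have : `|l' - l| < e by rewrite ltr_distl; apply/andP; split; lra.
  lra.
rewrite lebesgue_measure_itv /= lte_fin ifT; last by lra.
move=> key; rewrite /= EFinM; apply: lee_wpmul2l.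
  by rewrite lee_fin invr_ge0 /lam_lo; lra.
apply: le_trans key; rewrite -EFinM lee_fin.
by rewrite (_ : l + e - (l - e) = e *+ 2) // mulr2n; ring.
Qed.

Section MeasurableTarget.
Hypothesis mB : measurable B.
Variable mu : R.
Hypotheses (mu0 : 0 < mu) (muE : lebesgue_measure (B `&` A0) = mu%:E).

Lemma ptrans_gt0_near_A0 x : A0 x -> ptrans_gt0_near 1 x.
Proof.
move=> /A0E/andP[x1 x2].
exists (Num.min (x - 287 / 387) (3 / 4 - x)).
  by rewrite lt_min; apply/andP; split; lra.
exists ((4 - lam_lo)^-1 * mu); first by rewrite /lam_lo; apply: mulr_gt0 => //; rewrite invr_gt0; lra.
move=> w; rewrite lt_min !ltr_distl => /andP[/andP[w1 _] /andP[_ w2]].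
pose y := w * (1 - w).
have y0 : 0 < y by rewrite /y; apply: mulr_gt0; lra.
have y1 : y <= 1 by rewrite /y; nra.
(* Together, ylo and yhi say that the one-step range (3.87 y, 4 y) covers A0. *)
have ylo : 387 / 100 * y < 287 / 387.
  have : 0 < (w - 287 / 387) * (w + 287 / 387 - 1) by apply: mulr_gt0; lra.
  rewrite /y; nra.
have yhi : 3 / 4 < 4 * y.
  have : 0 < (w - 287 / 387) * (3 / 4 - w) by apply: mulr_gt0; lra.
  rewrite /y; nra.
have mBA0 : measurable (B `&` A0) by apply: measurableI => //; exact: measurable_itv.
pose A := (fun l => l * y) @^-1` (B `&` A0).
have mA : measurable A.
  by have := measurable_realfun.mulrr_measurable y measurableT mBA0; rewrite setTI.
have : (1%:E * lebesgue_measure A <=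
    \int[lebesgue_measure]_(l in lam_int) ptrans 0 (logistic l w) B)%E.
  apply: mul_measure_le_integral => // [l [_ /A0E/andP[l1 l2]]|l _|l [Bly _]].
  - by apply/lam_intE/andP; split; nra.
  - exact: ptrans_ge0.
  by rewrite /= lee_fin indicE /logistic -mulrA mem_set.
rewrite mul1e => key; rewrite EFinM; apply: lee_wpmul2l.
  by rewrite lee_fin invr_ge0 /lam_lo; lra.
apply: le_trans key; rewrite -muE (lebesgue_measure_mulr_preimage y0 mBA0).
by rewrite -[X in (_ <= X)%E]mul1e lee_wpmul2r ?measure_ge0 ?lee_fin.
Qed.

Lemma reachA0_ptrans_gt0_near x : reachA0 x -> exists2 k, (0 < k)%N & ptrans_gt0_near k x.
Proof.
elim=> {x} [x /ptrans_gt0_near_A0 hx | x l hl hfx [k k0 hk]]; first by exists 1%N.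
exists k.+1 => //; apply: (ptrans_gt0_near_step _ hl hk).
exact: reachA0_01 (reachA0_step hl hfx).
Qed.

End MeasurableTarget.

End TransitionLowerBounds.

Theorem mainTheorem3 (R : realType) :
  forall (x : R), S_space x ->
  forall (B : set R), measurable B -> B `<=` S_space -> (0 < phi B)%E ->
  exists n : nat, (1 <= n)%N /\ (0 < ptrans n x B)%E.
Proof.
move=> x Sx B mB _ phiB.
have [mu mu0 muE] := phi_gt0_measure mB phiB.
have x01 : 0 < x < 1 by move: Sx; rewrite /S_space /= in_itv.
have [k k0 [r r0 [d d0 hd]]] := reachA0_ptrans_gt0_near mB mu0 muE (reachA0_all x01).
exists k; split => //; apply: lt_le_trans (hd x _); first by rewrite lte_fin.
by rewrite subrr normr0.
Qed.
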